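(* Let $(S,\mathcal F,\mathcal L)$ be a $p$-local finite group and let $V\le Z(S)$ be an $\mathcal F$-weakly closed subgroup such that $\mathrm{Aut}_{\mathcal F}(V)$ is a $p$-group. Then $V$ is central in $(S,\mathcal F,\mathcal L)$, that is, $(S,\mathcal F,\mathcal L)=(C_S(V),C_{\mathcal F}(V),C_{\mathcal L}(V))$; in particular $\mathcal F=C_{\mathcal F}(V)$.
   Context: A subgroup of $S$ is $\mathcal F$-weakly closed if no other subgroup of $S$ is $\mathcal F$-conjugate to it. For $Q\le S$, the centralizer fusion system $C_{\mathcal F}(Q)$ is the fusion system over $C_S(Q)$ with $\mathrm{Hom}_{C_{\mathcal F}(Q)}(P,P')=\{\phi\in\mathrm{Hom}_{\mathcal F}(P,P')\mid\exists\psi\in\mathrm{Hom}_{\mathcal F}(PQ,P'Q),\ \psi|_P=\phi,\ \psi|_Q=\mathrm{id}\}$. For $V\le Z(S)$ (so $C_S(V)=S$), $C_{\mathcal L}(V)$ denotes the subcategory of $\mathcal L$ with $\mathrm{Mor}_{C_{\mathcal L}(V)}(P,Q)=\pi^{-1}(\mathrm{Hom}_{C_{\mathcal F}(V)}(P,Q))$ for $\mathcal F$-centric $P,Q$. Let $p$ be a prime and $S$ a finite $p$-group. For $P,Q\le S$, $\mathrm{Hom}_S(P,Q)$ is the set of maps $c_g\colon x\mapsto gxg^{-1}$ with $g\in S$, $gPg^{-1}\le Q$, and $\mathrm{Aut}_S(P)=\mathrm{Hom}_S(P,P)$. A fusion system $\mathcal F$ over $S$ is a category whose objects are the subgroups of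 $S$, with $\mathrm{Hom}_S(P,Q)\subseteq\mathrm{Hom}_{\mathcal F}(P,Q)\subseteq \mathrm{Inj}(P,Q)$, such that every morphism factors as an $\mathcal F$-isomorphism followed by an inclusion. Subgroups are $\mathcal F$-conjugate if they are isomorphic in $\mathcal F$. $P$ is fully centralized (resp. fully normalized) if $|C_S(P)|\ge |C_S(P')|$ (resp. $|N_S(P)|\ge|N_S(P')|$) for all $P'$ $\mathcal F$-conjugate to $P$. $\mathcal F$ is saturated if (I) every fully normalized $P$ is fully centralized and $\mathrm{Aut}_S(P)$ is a Sylow $p$-subgroup of $\mathrm{Aut}_{\mathcal F}(P)$, and (II) whenever $\phi\in\mathrm{Hom}_{\mathcal F}(P,S)$ with $\phi(P)$ fully centralized, $\phi$ extends to a morphism in $\mathcal F$ defined on $N_\phi=\{g\in N_S(P):\phi c_g\phi^{-1}\in \mathrm{Aut}_S(\phi(P))\}$. $P$ is $\mathcal F$-centric if $C_S(P')\le P'$ for all $P'$ $\mathcal F$-conjugate to $P$; $\mathcal F^c$ is the full subcategory on these. A centric linking system associated to $\mathcal F$ is a category $\mathcal L$ with objects the $\mathcal F$-centric subgroups, a functor $\pi\colon\mathcal L\to\mathcal F^c$ which is the identity on objects, and monomorphisms $\delta_P\colon P\to\mathrm{Aut}_{\mathcal L}(P)$, such that (A) $Z(P)$ (via $\delta_P$) acts freely on $\mathrm{Mor}_{\mathcal L}(P,Q)$ by composition and $\pi$ induces a bijection $\mathrm{Mor}_{\mathcal L}(P,Q)/Z(P)\to\mathrm{Hom}_{\mathcal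 F}(P,Q)$; (B) $\pi(\delta_P(g))=c_g$ for $g\in P$; (C) $f\circ\delta_P(g)=\delta_Q(\pi(f)(g))\circ f$ for $f\in\mathrm{Mor}_{\mathcal L}(P,Q)$, $g\in P$. A $p$-local finite group is a triple $(S,\mathcal F,\mathcal L)$ with $\mathcal F$ a saturated fusion system over $S$ and $\mathcal L$ an associated centric linking system. *)

From HB Require Import structures.
From mathcomp Require Import all_boot all_fingroup pgroup center.
Set Implicit Arguments. Unset Strict Implicit. Unset Printing Implicit Defensive.

Local Open Scope group_scope.

(* Conventions.
   * A morphism P -> Q between subgroups of S is represented by a finite
     function f : {ffun gT -> gT}, normalized so that f x = 1 for x \notin P.
   * A fusion system over S is a boolean predicate F P Q f
     ("f \in Hom_F(P,Q)"), indexed by subsets of gT; the axioms force P, Q to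
     be subgroups of S.
   * Paper's c_g : x |-> g x g^-1 is  x |-> x ^ g^-1  in MathComp. *)

Section Fusion.
Variable gT : finGroupType.

Definition fres (P : {set gT}) (f : gT -> gT) : {ffun gT -> gT} :=
  [ffun x => if x \in P then f x else 1].

Definition fcomp (P : {set gT}) (g f : {ffun gT -> gT}) : {ffun gT -> gT} :=
  fres P (fun x => g (f x)).

Definition finv (P : {set gT}) (f : {ffun gT -> gT}) : {ffun gT -> gT} :=
  fres (f @: P) (fun z => odflt 1 [pick x in P | f x == z]).

Definition cmap (P : {set gT}) (g : gT) : {ffun gT -> gT} :=
  fres P (fun x => x ^ g^-1).

Definition HomS (S P Q : {set gT}) : pred {ffun gT -> gT} :=
  [pred f | [exists g in S, (P :^ g^-1 \subset Q) && (f == cmap P g)]].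

Definition injhom (P Q : {set gT}) (f : {ffun gT -> gT}) : bool :=
  [&& [forall x, (x \notin P) ==> (f x == 1)],
      [forall x in P, forall y in P, f (x * y) == f x * f y],
      [forall x in P, forall y in P, (f x == f y) ==> (x == y)] &
      (f @: P \subset Q)].

Definition fusion_system (S : {group gT})
    (F : {set gT} -> {set gT} -> pred {ffun gT -> gT}) : Prop :=
  [/\
      (forall P Q f, F P Q f ->
         [/\ group_set P, group_set Q, P \subset S & Q \subset S]),
      (forall P Q : {group gT}, P \subset S -> Q \subset S ->
         forall f, HomS S P Q f -> F P Q f),
      (forall P Q f, F P Q f -> injhom P Q f),
      (forall P Q R f g, F P Q f -> F Q R g -> F P R (fcomp P g f)) &
      (forall P Q f, F P Q f ->
         F P (f @: P) f /\
         exists g, [/\ F (f @: P) P g, fcomp P g f = fres P id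
                     & fcomp (f @: P) f g = fres (f @: P) id])].

Variable (S : {group gT}) (F : {set gT} -> {set gT} -> pred {ffun gT -> gT}).

Definition Fconj (P P' : {set gT}) : bool :=
  [exists f, F P P' f && (f @: P == P')].

Definition fully_centralized (P : {set gT}) : Prop :=
  forall P', Fconj P P' -> #|'C_S(P')| <= #|'C_S(P)|.

Definition fully_normalized (P : {set gT}) : Prop :=
  forall P', Fconj P P' -> #|'N_S(P')| <= #|'N_S(P)|.

Definition AutF (P : {set gT}) : {set {ffun gT -> gT}} := [set f | F P P f].
Definition AutS (P : {set gT}) : {set {ffun gT -> gT}} := [set f | HomS S P P f].

Definition Nphi (P : {set gT}) (f : {ffun gT -> gT}) : {set gT} :=
  [set g in 'N_S(P) |
     fcomp (f @: P) f (fcomp (f @: P) (cmap P g) (finv P f)) \in AutS (f @: P)].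

Definition saturated_fusion_system (p : nat) : Prop :=
  [/\ fusion_system S F,
      (* axiom (I); Sylow p-subgroup = subgroup of order the p-part *)
      (forall P : {group gT}, P \subset S -> fully_normalized P ->
         fully_centralized P /\ (#|AutS P| = (#|AutF P|)`_p)%N) &
      (forall (P : {group gT}) f, F P S f -> fully_centralized (f @: P) ->
         exists psi, F (Nphi P f) S psi /\ {in P, psi =1 f})].

Definition Fcentric (P : {set gT}) : bool :=
  [&& group_set P, P \subset S &
      [forall P' : {set gT}, Fconj P P' ==> ('C_S(P') \subset P')]].

Definition weakly_closed (V : {set gT}) : Prop :=
  forall P', Fconj V P' -> P' = V.

Definition CF (V P Q : {set gT}) (f : {ffun gT -> gT}) : bool :=
  [&& P \subset 'C_S(V), Q \subset 'C_S(V), F P Q f &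
      [exists psi : {ffun gT -> gT},
         [&& F (P * V) (Q * V) psi,
             [forall x in P, psi x == f x] &
             [forall v in V, psi v == v]]]].

End Fusion.

(* Data of a category L with objects (sets of) subgroups, functor pi,
   and the maps delta_P. lcomp g f is "g o f". *)
Record linking_data (gT : finGroupType) := LinkingData {
  lmor : Type;
  ldom : lmor -> {set gT};
  lcod : lmor -> {set gT};
  lid : {set gT} -> lmor;
  lcomp : lmor -> lmor -> lmor;
  lpi : lmor -> {ffun gT -> gT};
  ldelta : {set gT} -> gT -> lmor }.

Section Linking.
Variables (gT : finGroupType) (S : {group gT})
  (F : {set gT} -> {set gT} -> pred {ffun gT -> gT}) (L : linking_data gT).

Local Notation Mor := (lmor L).
Local Notation dom := (@ldom _ L).
Local Notation cod := (@lcod _ L).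
Local Notation idm := (@lid _ L).
Local Notation comp := (@lcomp _ L).
Local Notation pi := (@lpi _ L).
Local Notation delta := (@ldelta _ L).
Local Notation centric := (Fcentric S F).

Definition centric_linking_system : Prop :=
  [/\
   [/\ (forall m : Mor, centric (dom m) && centric (cod m)),
       (forall P, centric P -> dom (idm P) = P /\ cod (idm P) = P),
       (forall f g : Mor, cod f = dom g ->
          dom (comp g f) = dom f /\ cod (comp g f) = cod g),
       (forall f : Mor, comp f (idm (dom f)) = f /\ comp (idm (cod f)) f = f) &
       (forall f g h : Mor, cod f = dom g -> cod g = dom h ->
          comp h (comp g f) = comp (comp h g) f)],
   [/\ (forall m : Mor, F (dom m) (cod m) (pi m)),
       (forall P, centric P -> pi (idm P) = fres P id) &
       (forall f g : Mor, cod f = dom g ->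
          pi (comp g f) = fcomp (dom f) (pi g) (pi f))],
   (forall P, centric P ->
      [/\ (forall x, x \in P -> dom (delta P x) = P /\ cod (delta P x) = P),
          delta P 1 = idm P,
          {in P &, forall x y, delta P (x * y) = comp (delta P x) (delta P y)} &
          {in P &, injective (delta P)}]),
   [/\ (forall (m : Mor) z, z \in 'Z(dom m) ->
          comp m (delta (dom m) z) = m -> z = 1),
       (forall P Q, centric P -> centric Q -> forall f, F P Q f ->
          exists m : Mor, [/\ dom m = P, cod m = Q & pi m = f]) &
       (forall m m' : Mor, dom m = dom m' -> cod m = cod m' -> pi m = pi m' ->
          exists2 z, z \in 'Z(dom m) & m' = comp m (delta (dom m) z))] &
   (forall P, centric P -> forall g, g \in P -> pi (delta P g) = cmap P g) /\
   (forall (m : Mor) g, g \in dom m ->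
      comp m (delta (dom m) g) = comp (delta (cod m) (pi m g)) m)].

End Linking.

From Pilot Require Import Defs.
From HB Require Import structures.
From mathcomp Require Import all_boot all_fingroup pgroup center.
Set Implicit Arguments. Unset Strict Implicit. Unset Printing Implicit Defensive.
Local Open Scope group_scope.

(* Since V is central, Aut_S(V) is trivial; V is fully normalized by weak
   closure, so the Sylow axiom forces the p-group Aut_F(V) to be trivial.
   A morphism h : A -> S with fully centralized image extends by axiom (II)
   to N_h, which contains AV because V is central; the restriction of the
   extension to V is an F-automorphism of V (weak closure again), hence the
   identity.  A general f : P -> Q is handled by first moving f(P) to a fully
   centralized conjugate R by some f0: extending both f0 f and f0 to maps
   fixing V and composing the first with the inverse of the second gives an
   extension of f to PV -> QV fixing V. *)

Section MapFacts.
Variable gT : finGroupType.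

Lemma fresE (P : {set gT}) (f : gT -> gT) x : x \in P -> fres P f x = f x.
Proof. by move=> xP; rewrite ffunE xP. Qed.

Lemma fcompE (P : {set gT}) (g f : {ffun gT -> gT}) x :
  x \in P -> fcomp P g f x = g (f x).
Proof. exact: fresE. Qed.

Lemma cmap1 (P : {set gT}) : cmap P 1 = fres P id.
Proof. by apply/ffunP=> x; rewrite !ffunE invg1 conjg1. Qed.

End MapFacts.

Section FusionSystemTheory.
Variables (gT : finGroupType) (S : {group gT})
  (F : {set gT} -> {set gT} -> pred {ffun gT -> gT}).
Hypothesis FS : fusion_system S F.

Lemma fusion_hom_subgroups P Q f :
  F P Q f -> [/\ group_set P, group_set Q, P \subset S & Q \subset S].
Proof. by case: FS => H _ _ _ _; apply: H. Qed.

Lemma fusion_hom_injhom P Q f : F P Q f -> injhom P Q f.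
Proof. by case: FS => _ _ H _ _; apply: H. Qed.

Lemma fusion_hom_out P Q f x : F P Q f -> x \notin P -> f x = 1.
Proof.
by move/fusion_hom_injhom=> /and4P[/forallP H _ _ _] xP; apply/eqP; have:= H x; rewrite xP.
Qed.

Lemma fusion_homM P Q f : F P Q f -> {in P &, forall x y, f (x * y) = f x * f y}.
Proof.
move/fusion_hom_injhom=> /and4P[_ /forall_inP H _ _] x y xP yP.
by apply/eqP; have /forall_inP := H x xP; apply.
Qed.

Lemma fusion_hom_im P Q f : F P Q f -> f @: P \subset Q.
Proof. by move/fusion_hom_injhom=> /and4P[]. Qed.

Lemma fusion_hom_mem P Q f x : F P Q f -> x \in P -> f x \in Q.
Proof. by move=> H xP; apply: (subsetP (fusion_hom_im H)); apply: imset_f. Qed.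

Lemma fusion_hom1 P Q f : F P Q f -> f 1 = 1.
Proof.
move=> H; have [gP _ _ _] := fusion_hom_subgroups H.
have P1 : 1 \in P by case/andP: gP.
by apply: (mulgI (f 1)); rewrite -(fusion_homM H) ?mulg1.
Qed.

Lemma fusion_homV P Q f x : F P Q f -> x \in P -> f x^-1 = (f x)^-1.
Proof.
move=> H xP; have [gP _ _ _] := fusion_hom_subgroups H.
have xiP : x^-1 \in Group gP by rewrite groupV.
by apply: (mulgI (f x)); rewrite -(fusion_homM H) // mulgV (fusion_hom1 H) mulgV.
Qed.

Lemma fusion_HomS (P Q : {group gT}) f :
  P \subset S -> Q \subset S -> HomS S P Q f -> F P Q f.
Proof. by case: FS => _ H _ _ _ PS QS; apply: H. Qed.

Lemma fusion_comp P Q R f g : F P Q f -> F Q R g -> F P R (fcomp P g f).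
Proof. by case: FS => _ _ _ H _; apply: H. Qed.

Lemma fusion_factor P Q f : F P Q f ->
  F P (f @: P) f /\
  exists g, [/\ F (f @: P) P g, fcomp P g f = fres P id
              & fcomp (f @: P) f g = fres (f @: P) id].
Proof. by case: FS => _ _ _ _ H; apply: H. Qed.

Lemma fusion_incl (A B : {group gT}) : A \subset B -> B \subset S -> F A B (fres A id).
Proof.
move=> AB BS; rewrite -cmap1; apply: fusion_HomS => //; first exact: subset_trans BS.
by apply/existsP; exists 1; rewrite group1 invg1 conjsg1 AB eqxx.
Qed.

Lemma fusion_restr A B f (A' : {group gT}) :
  F A B f -> A' \subset A -> F A' B (fres A' f).
Proof.
move=> H sA; have [gA _ AS _] := fusion_hom_subgroups H.
have -> : fres A' f = fcomp A' f (fres A' id).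
  by apply/ffunP=> x; rewrite !ffunE; case: ifP => // ->.
exact: fusion_comp (fusion_incl (B := Group gA) _ _) H.
Qed.

Lemma fusion_widen A B f (C : {group gT}) :
  F A B f -> B \subset C -> C \subset S -> F A C f.
Proof.
move=> H BC CS; have [_ gB _ _] := fusion_hom_subgroups H.
have -> : f = fcomp A (fres B id) f.
  apply/ffunP=> x; rewrite !ffunE; case: ifP => xA; first by rewrite (fusion_hom_mem H).
  by rewrite (fusion_hom_out H) ?xA // if_same.
exact: fusion_comp H (fusion_incl (A := Group gB) _ _).
Qed.

Lemma Fconj_refl (Y : {group gT}) : Y \subset S -> Fconj F Y Y.
Proof.
move=> YS; apply/existsP; exists (fres Y id); rewrite fusion_incl //=.
by apply/eqP; rewrite -[RHS]imset_id; apply: eq_in_imset => x; apply: fresE.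
Qed.

Lemma Fconj_trans X Y Z : Fconj F X Y -> Fconj F Y Z -> Fconj F X Z.
Proof.
case/existsP=> f /andP[Hf /eqP eY]; case/existsP=> g /andP[Hg /eqP eZ].
apply/existsP; exists (fcomp X g f); rewrite (fusion_comp Hf) ?eY //.
rewrite -eZ -eY -imset_comp; apply/eqP/eq_in_imset=> x; exact: fcompE.
Qed.

Lemma exists_fully_centralized_conj (Y : {group gT}) : Y \subset S ->
  exists R, Fconj F Y R /\ fully_centralized S F R.
Proof.
move=> YS.
have [R YR Rmax] := arg_maxnP (fun R => #|'C_S(R)|) (Fconj_refl YS).
by exists R; split=> // P' RP'; apply: Rmax; apply: Fconj_trans RP'.
Qed.

End FusionSystemTheory.

Section CentralSubgroup.
Variables (gT : finGroupType) (S V : {group gT}).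
Hypothesis VZ : V \subset 'Z(S).

Lemma central_sub : V \subset S.
Proof. exact: subset_trans VZ (center_sub S). Qed.

Lemma central_sub_cent (A : {set gT}) : A \subset S -> V \subset 'C(A).
Proof. by move=> AS; apply: subset_trans VZ (subset_trans (subsetIr _ _) (centS AS)). Qed.

Lemma central_commute v x : v \in V -> x \in S -> commute v x.
Proof.
move=> vV xS; have xS1 : [set x] \subset S by rewrite sub1set.
by have /centP := subsetP (central_sub_cent xS1) v vV; apply; rewrite set11.
Qed.

Lemma central_cent_eq : 'C_S(V) = S.
Proof. by apply/setIidPl; rewrite centsC central_sub_cent. Qed.

Lemma mul_central_group_set (A : {group gT}) : A \subset S -> group_set (A * V).
Proof.
move=> AS; apply/comm_group_setP/normC.
by apply: subset_trans (cent_sub _); rewrite centsC central_sub_cent.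
Qed.

Lemma AutS_central : AutS S V = [set fres V id].
Proof.
apply/setP=> f; rewrite !inE; apply/existsP/eqP.
  case=> g /andP[gS /andP[_ /eqP->]]; apply/ffunP=> x; rewrite !ffunE; case: ifP=> // xV.
  by rewrite conjgE (commuteV (central_commute xV gS)) mulKg.
by move->; exists 1; rewrite group1 invg1 conjsg1 subxx cmap1 eqxx.
Qed.

End CentralSubgroup.

Section CentralExtension.
Variables (gT : finGroupType) (S V : {group gT})
  (F : {set gT} -> {set gT} -> pred {ffun gT -> gT}).
Hypotheses (FS : fusion_system S F) (VZ : V \subset 'Z(S)).

(* h c_(av) h^-1 = c_(h a) on h(A), since v centralizes A. *)
Lemma mul_central_sub_Nphi (A : {group gT}) h : F A S h -> A * V \subset Nphi S A h.
Proof.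
move=> Hh; have [_ _ AS _] := fusion_hom_subgroups FS Hh.
have [HY _] := fusion_factor FS Hh; have [_ gY _ _] := fusion_hom_subgroups FS HY.
apply/subsetP => _ /mulsgP[a v aA vV ->]; rewrite inE.
have aN : a \in 'N_S(A) by rewrite inE (subsetP AS) ?(subsetP (normG A)).
have vN : v \in 'N_S(A).
  rewrite inE (subsetP (central_sub VZ)) //.
  by rewrite (subsetP (cent_sub A)) ?(subsetP (central_sub_cent VZ AS)).
rewrite groupM //= inE.
apply/existsP; exists (h a); rewrite (fusion_hom_mem FS Hh aA) /=.
have haY : h a \in h @: A by apply: imset_f.
rewrite (conjGid (G := Group gY)) ?groupV // subxx /=.
apply/eqP/ffunP=> z; rewrite [in RHS]ffunE; case: ifP => zY; last by rewrite ffunE zY.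
rewrite fcompE // fcompE // /Defs.finv fresE //.
case: pickP => [y /andP[yA /eqP hy]|none]; last first.
  by case/imsetP: zY => y yA e; have := none y; rewrite yA e eqxx.
rewrite /cmap fresE //= invMg conjgM.
have -> : y ^ v^-1 = y.
  by rewrite conjgE invgK mulgA (central_commute VZ vV (subsetP AS y yA)) mulgK.
have aiA : a^-1 \in A by rewrite groupV.
rewrite conjgE invgK (fusion_homM FS Hh) ?groupM // (fusion_homM FS Hh) //.
by rewrite (fusion_homV FS Hh) // hy conjgE invgK mulgA.
Qed.

Lemma extension_image_sub (P Y : {group gT}) f f0 chi1 chi2 :
    F (P * V) S chi1 -> F (Y * V) S chi2 -> f @: P \subset Y ->
    {in P, forall x, chi1 x = f0 (f x)} -> {in Y, chi2 =1 f0} ->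
    {in V, chi1 =1 id} -> {in V, chi2 =1 id} ->
  chi1 @: (P * V) \subset chi2 @: (Y * V).
Proof.
move=> H1 H2 fPY e1 e2 id1 id2.
apply/subsetP => _ /imsetP[_ /mulsgP[a v aP vV ->] ->].
have faY : f a \in Y by rewrite (subsetP fPY) ?imset_f.
have aPV : a \in P * V by rewrite (subsetP (mulG_subl V P)).
have vPV : v \in P * V by rewrite (subsetP (mulG_subr P V)).
have faYV : f a \in Y * V by rewrite (subsetP (mulG_subl V Y)).
have vYV : v \in Y * V by rewrite (subsetP (mulG_subr Y V)).
rewrite (fusion_homM FS H1) // e1 // id1 // -(e2 _ faY) -(id2 v vV).
by rewrite -(fusion_homM FS H2) // imset_f ?mem_mulg.
Qed.

End CentralExtension.

Section CentralWeaklyClosed.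
Variables (gT : finGroupType) (p : nat) (S V : {group gT})
  (F : {set gT} -> {set gT} -> pred {ffun gT -> gT}).
Hypotheses (satF : saturated_fusion_system S F p) (VZ : V \subset 'Z(S))
  (wcV : weakly_closed F V) (AutFV_pgroup : p.-nat #|AutF F V|).

Let FS : fusion_system S F. Proof. by case: satF. Qed.

Lemma AutF_central_trivial f : F V V f -> f = fres V id.
Proof.
move=> Hf; have fnV : fully_normalized S F V by move=> P' /wcV ->.
have [_ satI _] := satF; have [_] := satI V (central_sub VZ) fnV.
rewrite AutS_central // cards1 part_pnat_id // => /esym/eqP/cards1P[k AutFV1].
have : f \in AutF F V by rewrite inE.
have : fres V id \in AutF F V by rewrite inE (fusion_incl FS) ?(central_sub VZ).
by rewrite AutFV1 !inE => /eqP-> /eqP->.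
Qed.

Lemma central_extension (A : {group gT}) h :
    F A S h -> fully_centralized S F (h @: A) ->
  exists chi, [/\ F (A * V) S chi, {in A, chi =1 h} & {in V, chi =1 id}].
Proof.
move=> Hh fc; have [_ _ AS _] := fusion_hom_subgroups FS Hh.
have [_ _ satII] := satF; have [psi [Hpsi psi_h]] := satII A h Hh fc.
pose AV := Group (mul_central_group_set VZ AS).
have Hchi := fusion_restr FS Hpsi (mul_central_sub_Nphi FS VZ Hh : AV \subset _).
exists (fres AV psi); split=> // [x xA|v vV].
  by rewrite fresE ?psi_h // (subsetP (mulG_subl V A)).
have [HV _] := fusion_factor FS (fusion_restr FS Hchi (mulG_subr A V)).
have VV : Fconj F V (fres V (fres AV psi) @: V).
  by apply/existsP; exists (fres V (fres AV psi)); rewrite HV eqxx.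
rewrite (wcV VV) in HV.
have := congr1 (fun f : {ffun gT -> gT} => f v) (AutF_central_trivial HV).
by rewrite /= !fresE // (subsetP (mulG_subr A V)).
Qed.

Lemma fusion_extension P Q f : F P Q f ->
  exists psi, [/\ F (P * V) (Q * V) psi, {in P, psi =1 f} & {in V, psi =1 id}].
Proof.
move=> Hf; have [gP gQ PS QS] := fusion_hom_subgroups FS Hf.
pose P0 := Group gP; pose Q0 := Group gQ.
have [HY _] := fusion_factor FS Hf; have [_ gY _ YS] := fusion_hom_subgroups FS HY.
pose Y := Group gY.
have [R [/existsP[f0 /andP[H0 /eqP f0Y]] fcR]] := exists_fully_centralized_conj FS (Y := Y) YS.
have [_ _ _ RS] := fusion_hom_subgroups FS H0.
have H1 : F P0 S (fcomp P f0 f) := fusion_widen FS (fusion_comp FS HY H0) RS (subxx S).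
have fc1 : fully_centralized S F (fcomp P f0 f @: P0).
  suff -> : fcomp P f0 f @: P0 = R by [].
  by rewrite -f0Y -imset_comp; apply: eq_in_imset => x; apply: fcompE.
have [chi1 [Hchi1 chi1_f chi1_V]] := central_extension H1 fc1.
have H0S : F Y S f0 := fusion_widen FS H0 RS (subxx S).
have fc2 : fully_centralized S F (f0 @: Y) by rewrite f0Y.
have [chi2 [Hchi2 chi2_f0 chi2_V]] := central_extension H0S fc2.
have [Hchi2' [g [Hg g_chi2 _]]] := fusion_factor FS Hchi2.
have [_ gI _ IS] := fusion_hom_subgroups FS Hchi2'.
have chi1_sub : chi1 @: (P0 * V) \subset chi2 @: (Y * V).
  apply: (extension_image_sub FS (f := f) Hchi1 Hchi2 (subxx _) _ chi2_f0 chi1_V chi2_V).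
  by move=> x xP; rewrite chi1_f ?fcompE.
have Hchi1' := fusion_widen FS (C := Group gI) (fusion_factor FS Hchi1).1 chi1_sub IS.
have g_chi2E x : x \in Y * V -> g (chi2 x) = x.
  by move=> xYV; have := congr1 (fun k : {ffun gT -> gT} => k x) g_chi2; rewrite /= !fresE.
exists (fcomp (P * V) g chi1); split.
- pose QV := Group (mul_central_group_set VZ (A := Q0) QS).
  apply: (fusion_widen FS (C := QV) (fusion_comp FS Hchi1' Hg)).
    exact: mulSg V (fusion_hom_im FS Hf).
  exact: mul_subG QS (central_sub VZ).
- move=> x xP; have fxY : f x \in Y by apply: imset_f.
  rewrite fcompE ?(subsetP (mulG_subl V P0)) // chi1_f // fcompE // -chi2_f0 //.
  by rewrite g_chi2E ?(subsetP (mulG_subl V Y)).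
- move=> v vV; rewrite fcompE ?(subsetP (mulG_subr P0 V)) // chi1_V // -{1}(chi2_V v vV).
  by rewrite g_chi2E ?(subsetP (mulG_subr Y V)).
Qed.

Lemma CF_of_fusion P Q f : F P Q f -> CF S F V P Q f.
Proof.
move=> Hf; have [_ _ PS QS] := fusion_hom_subgroups FS Hf.
have [psi [Hpsi psi_f psi_V]] := fusion_extension Hf.
rewrite /CF central_cent_eq // PS QS Hf; apply/existsP; exists psi.
rewrite Hpsi /=; apply/andP; split; apply/forall_inP=> x xP.
  by rewrite psi_f.
by rewrite psi_V.
Qed.

End CentralWeaklyClosed.

Theorem proposition5p2 (gT : finGroupType) (p : nat) (S : {group gT})
    (F : {set gT} -> {set gT} -> pred {ffun gT -> gT})
    (L : linking_data gT) (V : {group gT}) :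
  prime p -> p.-group S ->
  saturated_fusion_system S F p ->
  centric_linking_system S F L ->
  V \subset 'Z(S) ->
  weakly_closed F V ->
  p.-nat #|AutF F V| ->
  [/\ 'C_S(V) = S :> {set gT},
      (forall P Q f, F P Q f = CF S F V P Q f) &
      (forall m : lmor L, CF S F V (ldom m) (lcod m) (lpi m))].
Proof.
move=> _ _ satF [_ [piF _ _] _ _ _] VZ wcV pAutFV.
have CF_F P Q f := CF_of_fusion satF VZ wcV pAutFV (P := P) (Q := Q) (f := f).
split=> [|P Q f|m]; first exact: central_cent_eq.
- by apply/idP/idP=> [/CF_F|/and4P[]].
- exact/CF_F/piF.
Qed.
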